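(* Let $G$ be a (simple) graph on $n$ vertices, let $p\in(0,1)$, and let $a\ge 1$ be an integer. Then \[|t_{K_{2,a}}(f_{p,G})|\le 2\nu_{p,G}^a+2n^{-2/3}.\]
   Context: For a finite set $V$, $\Omega_V$ is $V$ with the uniform probability measure. For a graph $G$, $W_G\colon\Omega_{V(G)}^2\to[0,1]$ is $W_G(x,y)=1$ if $xy\in E(G)$ and $0$ otherwise (in particular $W_G(x,x)=0$). For $p\in(0,1)$, $f_{p,G}(x,y)=W_G(x,y)-p$, and \[\nu_{p,G}=\max_{x\neq y\in V(G)}\max\big(0,\ \mathbb{E}_z f_{p,G}(x,z)f_{p,G}(z,y)\big),\] with $z$ uniform on $V(G)$. For a graph $H$ and bounded symmetric $W$ on a probability space $\Omega$, $t_H(W)=\int_{\Omega^{V(H)}}\prod_{v_1v_2\in E(H)}W(x_{v_1},x_{v_2})\,d\mathbf{x}$ (product measure); $K_{2,a}$ is the complete bipartite graph with parts of sizes $2$ and $a$, so $t_{K_{2,a}}(f)=\mathbb{E}_{x,y}\big(\mathbb{E}_zf(x,z)f(z,y)\big)^a$. *)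

From HB Require Import structures.
From mathcomp Require Import all_boot all_order all_algebra.
From mathcomp Require Import all_classical all_reals.
From mathcomp Require Import exp.
Set Implicit Arguments. Unset Strict Implicit. Unset Printing Implicit Defensive.
Import Order.TTheory GRing.Theory Num.Theory.
Local Open Scope ring_scope.

Definition simple_graph (T : finType) (e : rel T) : Prop :=
  (forall x y, e x y = e y x) /\ (forall x, ~~ e x x).

Section GraphDefs.
Variables (R : realType) (T : finType).

Definition nverts : R := (#|T|)%:R.

Definition unif_exp (g : T -> R) : R := (\sum_(z : T) g z) / nverts.

Definition W_G (e : rel T) (x y : T) : R := (e x y)%:R.

Definition f_pG (p : R) (e : rel T) (x y : T) : R := W_G e x y - p.

Definition codeg (f : T -> T -> R) (x y : T) : R := unif_exp (fun z => f x z * f z y).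

Definition nu_pG (p : R) (e : rel T) : R :=
  \big[Num.max/0]_(x : T) \big[Num.max/0]_(y : T | x != y)
     Num.max 0 (codeg (f_pG p e) x y).

Definition t_K2a (a : nat) (f : T -> T -> R) : R :=
  unif_exp (fun x => unif_exp (fun y => (codeg f x y) ^+ a)).

End GraphDefs.

From HB Require Import structures.
From mathcomp Require Import all_boot all_order all_algebra.
From mathcomp Require Import all_classical all_reals.
From mathcomp Require Import exp numfun.
From mathcomp Require Import ring lra.
Set Implicit Arguments. Unset Strict Implicit. Unset Printing Implicit Defensive.
Import Order.TTheory GRing.Theory Num.Theory.
Local Open Scope ring_scope.

(* Write c(x,y) = E_z f(x,z) f(z,y) for the codegree, so that t = E_{x,y} c^a,
   and split c = c⁺ - c⁻.  As f is symmetric, c is a Gram matrix, and expanding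
   c^k over k-tuples of middle vertices writes E c^k as a sum of squares; hence
   E (c⁻)^k <= E (c⁺)^k for odd k.  Off the diagonal c⁺ <= nu, so
   E (c⁺)^k <= 1/n + nu^k, which settles odd a.  For even a,
   t = E (c⁺)^a + E (c⁻)^a, and the negative part is bounded through the
   neighbouring odd exponents by AM-GM,
   2 (c⁻)^a <= l (c⁻)^(a-1) + l^-1 (c⁻)^(a+1), with l = max(nu, n^(-1/3)). *)

Section UniformExpectation.
Variables (R : realType) (U : finType).
Implicit Types (g h : U -> R).

Lemma unif_expD g h :
  unif_exp (fun z => g z + h z) = unif_exp g + unif_exp h.
Proof. by rewrite /unif_exp big_split mulrDl. Qed.

Lemma unif_expZ (l : R) g : unif_exp (fun z => l * g z) = l * unif_exp g.
Proof. by rewrite /unif_exp -mulr_sumr mulrA. Qed.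

Lemma ler_unif_exp g h : (forall z, g z <= h z) -> unif_exp g <= unif_exp h.
Proof.
move=> gh; rewrite /unif_exp ler_wpM2r ?invr_ge0 ?ler0n //.
by apply: ler_sum => z _.
Qed.

Lemma unif_exp_le_cst (b : R) g : 0 <= b -> (forall z, g z <= b) ->
  unif_exp g <= b.
Proof.
move=> b0 gb; apply: (@le_trans _ _ (unif_exp (fun=> b))).
  exact: ler_unif_exp.
rewrite /unif_exp /nverts sumr_const -[b *+ _]mulr_natr -mulrA.
have [->|n0] := eqVneq (#|U|%:R : R) 0; first by rewrite mul0r mulr0.
by rewrite divff // mulr1.
Qed.

Lemma unif_exp_ge0 g : 0 <= \sum_z g z -> 0 <= unif_exp g.
Proof. by move=> g0; rewrite /unif_exp mulr_ge0 ?invr_ge0 ?ler0n. Qed.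

Lemma ler_norm_unif_exp g : `|unif_exp g| <= unif_exp (fun z => `|g z|).
Proof.
rewrite /unif_exp /nverts normrM normfV normr_nat.
by rewrite ler_wpM2r ?invr_ge0 ?ler0n // ler_norm_sum.
Qed.

End UniformExpectation.

Lemma sum_gram_expn_ge0 (R : realDomainType) (I J : finType) (h : I -> J -> R) k :
  0 <= \sum_x \sum_y (\sum_z h x z * h y z) ^+ k.
Proof.
have expandE x y : (\sum_z h x z * h y z) ^+ k =
    \sum_(s : {ffun 'I_k -> J}) (\prod_i h x (s i)) * \prod_i h y (s i).
  rewrite -[in LHS](card_ord k) -prodr_const bigA_distr_bigA /=.
  by apply: eq_bigr => s _; rewrite -big_split.
under eq_bigr do under eq_bigr do rewrite expandE.
under eq_bigr do rewrite exchange_big /=.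
rewrite exchange_big /=; apply: sumr_ge0 => s _.
under eq_bigr do rewrite -mulr_sumr.
by rewrite -mulr_suml -expr2 sqr_ge0.
Qed.

Section Pairs.
Variables (R : realType) (T : finType).
Local Notation n := (nverts R T).

Lemma unif_exp_pair (g : T -> T -> R) :
  unif_exp (fun x => unif_exp (g x)) = unif_exp (fun u : T * T => g u.1 u.2).
Proof.
by rewrite /unif_exp /nverts -mulr_suml pair_bigA card_prod natrM invfM mulrA.
Qed.

Lemma unif_exp_offdiag_le (g : T * T -> R) (b : R) : 0 <= b ->
  (forall x, g (x, x) <= 1) -> (forall x y, x != y -> g (x, y) <= b) ->
  unif_exp g <= n^-1 + b.
Proof.
move=> b0 g_diag g_off.
apply: (@le_trans _ _ (unif_exp (fun u => (u.1 == u.2)%:R + b))).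
  apply: ler_unif_exp => -[x y] /=; have [<-|xy] := eqVneq x y.
    by rewrite -[g _]addr0 lerD.
  by rewrite add0r g_off.
rewrite unif_expD -(unif_exp_pair (fun x y => (x == y)%:R)).
apply: lerD; last exact: unif_exp_le_cst.
apply: unif_exp_le_cst; rewrite ?invr_ge0 ?ler0n // => x.
rewrite /unif_exp (bigD1 x) //= eqxx big1 ?addr0 ?mul1r // => y.
by rewrite eq_sym => /negbTE ->.
Qed.

Lemma t_K2a_ge0 (f : T -> T -> R) k : (forall x y, f x y = f y x) ->
  0 <= t_K2a k f.
Proof.
move=> f_sym.
have codegE x y : codeg f x y = n^-1 * \sum_z f x z * f y z.
  by rewrite /codeg /unif_exp mulrC; under eq_bigr do rewrite (f_sym _ y).
rewrite /t_K2a unif_exp_pair; apply: unif_exp_ge0.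
rewrite -(pair_bigA _ (fun x y => codeg f x y ^+ k)) /=.
under eq_bigr do under eq_bigr do rewrite codegE exprMn.
under eq_bigr do rewrite -mulr_sumr.
by rewrite -mulr_sumr mulr_ge0 ?exprn_ge0 ?invr_ge0 ?ler0n ?sum_gram_expn_ge0.
Qed.

End Pairs.

Lemma exprn_funrpos_funrneg (U : Type) (R : realDomainType) (F : U -> R) u k :
  (0 < k)%N -> F u ^+ k = F^\+ u ^+ k + (-1) ^+ k * F^\- u ^+ k.
Proof.
move=> k_gt0; have zero_k : (0 : R) ^+ k = 0 by rewrite expr0n eqn0Ngt k_gt0.
rewrite /funrpos /funrneg /=; have [F0|F0] := leP 0 (F u).
  by rewrite max_r ?oppr_le0 // zero_k mulr0 addr0.
by rewrite max_l ?oppr_ge0 ?ltW // zero_k add0r -exprMn mulN1r opprK.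
Qed.

Lemma amgm_expn (R : realFieldType) (x l : R) k : 0 <= x -> 0 < l ->
  2 * x ^+ k.+1 <= l * x ^+ k + l^-1 * x ^+ k.+2.
Proof.
move=> x0 l0; rewrite -subr_ge0.
have -> : l * x ^+ k + l^-1 * x ^+ k.+2 - 2 * x ^+ k.+1 =
    x ^+ k * (l - x) ^+ 2 / l.
  by rewrite !exprSr; field; rewrite gt_eqF.
by apply: divr_ge0 (ltW l0); apply: mulr_ge0; [exact: exprn_ge0 | exact: sqr_ge0].
Qed.

(* Take l = max(nu, m); when 2 m^2 >= 1 the trivial bound P + M <= 1 suffices. *)
Lemma amgm_family_bound (R : realFieldType) (m nu u P M : R) :
  0 < m <= 1 -> 0 <= u <= nu -> nu <= 1 ->
  P <= m ^+ 3 + u * nu -> P + M <= 1 ->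
  (forall l, 0 < l -> 2 * M <= l * (m ^+ 3 + u) + l^-1 * (m ^+ 3 + u * nu ^+ 2)) ->
  P + M <= 2 * (u * nu) + 2 * m ^+ 2.
Proof.
move=> /andP[m0 m1] /andP[u0 unu] nu1 hP hPM hM.
have m2E : m ^+ 2 = m * m by rewrite expr2.
have m3E : m ^+ 3 = m * (m * m) by rewrite !exprS expr0 mulr1.
have unu0 : 0 <= u * nu by nra.
have m2_ge0 : 0 <= m ^+ 2 := sqr_ge0 m.
have m3_ge0 : 0 <= m ^+ 3 := exprn_ge0 3 (ltW m0).
have m3_le : m ^+ 3 <= m ^+ 2 by nra.
have [m_le|nu_lt] := leP m nu.
- have nu0 : 0 < nu by exact: lt_le_trans m_le.
  have := hM nu nu0.
  have -> : nu^-1 * (m ^+ 3 + u * nu ^+ 2) = m ^+ 3 / nu + u * nu.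
    by field; rewrite gt_eqF.
  have : m ^+ 3 / nu <= m ^+ 2.
    by rewrite ler_pdivrMr // m3E m2E mulrA ler_wpM2l.
  have : nu * (m ^+ 3 + u) <= m ^+ 3 + u * nu by nra.
  lra.
- have := hM m m0.
  have -> : m^-1 * (m ^+ 3 + u * nu ^+ 2) = m ^+ 2 + u * nu * (nu / m).
    by field; rewrite gt_eqF.
  have : u * nu * (nu / m) <= u * nu.
    by apply: ler_piMr => //; rewrite ler_pdivrMr // mul1r ltW.
  have : m * (m ^+ 3 + u) <= m * m ^+ 3 + m ^+ 2 by nra.
  have [big|small] := leP 1 (2 * m ^+ 2); first lra.
  have : m * m ^+ 3 <= m ^+ 2 / 2 by nra.
  nra.
Qed.

Definition max_codeg (R : realType) (T : finType) (f : T -> T -> R) : R :=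
  \big[Num.max/0]_(x : T) \big[Num.max/0]_(y : T | x != y)
     Num.max 0 (codeg f x y).

Section Codegree.
Variables (R : realType) (T : finType) (f : T -> T -> R).
Hypotheses (f_sym : forall x y, f x y = f y x) (f_le1 : forall x y, `|f x y| <= 1).
Local Notation n := (nverts R T).
Local Notation nu := (max_codeg f).
Let c (u : T * T) : R := codeg f u.1 u.2.
Let P k : R := unif_exp (fun u => c^\+ u ^+ k).
Let M k : R := unif_exp (fun u => c^\- u ^+ k).

Lemma codeg_le1 x y : `|codeg f x y| <= 1.
Proof.
rewrite /codeg; apply: le_trans (ler_norm_unif_exp _) _.
apply: unif_exp_le_cst => // z.
by rewrite normrM mulr_ile1.
Qed.

Lemma max_codeg_ge0 : 0 <= nu.
Proof. exact: bigmax_ge_id. Qed.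

Lemma max_codeg_le1 : nu <= 1.
Proof.
apply: bigmax_le => // x _; apply: bigmax_le => // y _.
by rewrite ge_max ler01 (le_trans (ler_norm _) (codeg_le1 x y)).
Qed.

Lemma funrpos_codeg_le_max x y : x != y -> c^\+ (x, y) <= nu.
Proof.
move=> xy; rewrite /funrpos maxC; apply: le_trans (le_bigmax _ _ x).
exact: (le_bigmax_cond _ (P := fun y => x != y)).
Qed.

Lemma t_K2a_funrpos_funrneg k : (0 < k)%N -> t_K2a k f = P k + (-1) ^+ k * M k.
Proof.
move=> k_gt0; rewrite /t_K2a unif_exp_pair -unif_expZ -unif_expD.
by congr unif_exp; apply/funext => u; rewrite (exprn_funrpos_funrneg c).
Qed.

Lemma t_K2a_le1 k : t_K2a k f <= 1.
Proof.
rewrite /t_K2a unif_exp_pair; apply: unif_exp_le_cst => // u.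
by rewrite (le_trans (ler_norm _)) // normrX exprn_ile1 ?codeg_le1.
Qed.

Lemma unif_exp_funrpos_codeg_le k : P k <= n^-1 + nu ^+ k.
Proof.
apply: unif_exp_offdiag_le => [|x|x y xy]; first exact: exprn_ge0 max_codeg_ge0.
  rewrite exprn_ile1 ?funrpos_ge0 // /funrpos ge_max ler01.
  by rewrite (le_trans (ler_norm _) (codeg_le1 x x)).
by rewrite lerXn2r ?nnegrE ?funrpos_ge0 ?max_codeg_ge0 ?funrpos_codeg_le_max.
Qed.

Lemma unif_exp_funrneg_le_funrpos k : odd k -> M k <= P k.
Proof.
move=> k_odd; have := t_K2a_ge0 k f_sym.
by rewrite t_K2a_funrpos_funrneg ?odd_gt0 // -signr_odd k_odd mulN1r subr_ge0.
Qed.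

Lemma unif_exp_funrneg_amgm k l : 0 < l -> 2 * M k.+1 <= l * M k + l^-1 * M k.+2.
Proof.
move=> l0; rewrite -!unif_expZ -unif_expD; apply: ler_unif_exp => u.
exact: amgm_expn (funrneg_ge0 _ _) l0.
Qed.

Lemma t_K2a_le a (m : R) : (0 < a)%N -> 0 < m <= 1 -> n^-1 <= m ^+ 3 ->
  t_K2a a f <= 2 * nu ^+ a + 2 * m ^+ 2.
Proof.
move=> a_gt0 /andP[m_gt0 m_le1] n_le_m3.
have nu_ge0 := max_codeg_ge0; have nu_le1 := max_codeg_le1.
have m3_le_m2 : m ^+ 3 <= m ^+ 2 by rewrite ler_wiXn2l // ltW.
have P_le k : P k <= m ^+ 3 + nu ^+ k.
  by apply: le_trans (unif_exp_funrpos_codeg_le k) _; rewrite lerD2r.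
have t_eq := t_K2a_funrpos_funrneg a_gt0; rewrite -signr_odd in t_eq.
have [a_odd|a_even] := boolP (odd a).
  have M_ge0 : 0 <= M a.
    apply: unif_exp_ge0; apply: sumr_ge0 => u _.
    exact: exprn_ge0 (funrneg_ge0 _ _).
  have := P_le a; have := sqr_ge0 m; have := exprn_ge0 a nu_ge0.
  rewrite t_eq a_odd expr1 mulN1r; lra.
have := t_K2a_le1 a; rewrite t_eq (negbTE a_even) expr0 mul1r => t_le1.
have [k a_eq] : exists k, a = k.+1 by exists a.-1; rewrite prednK.
rewrite a_eq /= negbK in a_even; rewrite a_eq exprSr.
apply: (@amgm_family_bound _ _ nu) => //; first by rewrite m_gt0.
- by rewrite ler_iXnr ?odd_gt0 // andbT; apply: exprn_ge0.
- by rewrite -exprSr -a_eq.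
- by rewrite -a_eq.
move=> l l_gt0; apply: le_trans (unif_exp_funrneg_amgm k l_gt0) _.
have odd_k2 : odd k.+2 by rewrite /= negbK.
apply: lerD; apply: ler_wpM2l; rewrite ?invr_ge0 ?(ltW l_gt0) //.
  exact: le_trans (unif_exp_funrneg_le_funrpos a_even) (P_le k).
rewrite -exprD addn2.
exact: le_trans (unif_exp_funrneg_le_funrpos odd_k2) (P_le _).
Qed.

End Codegree.

Lemma f_pG_sym (R : realType) (T : finType) (e : rel T) (p : R) :
  (forall x y, e x y = e y x) -> forall x y, f_pG p e x y = f_pG p e y x.
Proof. by move=> e_sym x y; rewrite /f_pG /W_G e_sym. Qed.

Lemma f_pG_le1 (R : realType) (T : finType) (e : rel T) (p : R) x y :
  0 <= p <= 1 -> `|f_pG p e x y| <= 1.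
Proof.
by move=> /andP[p_ge0 p_le1]; rewrite /f_pG /W_G ler_norml; case: (e x y) => /=; lra.
Qed.

Theorem proposition3p6 (R : realType) (T : finType) (e : rel T) (p : R) (a : nat) :
  simple_graph e -> 0 < p -> p < 1 -> (1 <= a)%N ->
  `| t_K2a a (f_pG p e) | <=
    2 * (nu_pG p e) ^+ a + 2 * ((nverts R T) `^ (- (2 / 3))).
Proof.
move=> [e_sym _] p_gt0 p_lt1 a_gt0.
have f_sym := f_pG_sym p e_sym.
have f_le1 x y : `|f_pG p e x y| <= 1 by rewrite f_pG_le1 // !ltW.
rewrite ger0_norm ?(t_K2a_ge0 _ f_sym) //.
set n := nverts R T.
have [n_eq0|n_gt0] : n = 0 \/ 0 < n.
  by rewrite lt0r ler0n andbT; case: eqP; [left|right].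
  (* with no vertices, every uniform expectation is a sum divided by 0, i.e. 0 *)
  rewrite /t_K2a {1}/unif_exp -/n n_eq0 invr0 mulr0.
  by rewrite addr_ge0 ?mulr_ge0 ?exprn_ge0 ?powR_ge0 ?max_codeg_ge0.
set m := n `^ (- (1 / 3)).
have m_gt0 : 0 < m := powR_gt0 _ n_gt0.
have m3 : m ^+ 3 = n^-1.
  rewrite -powR_mulrn ?powR_ge0 // -powRrM (_ : _ * 3%:R = -1) ?powR_inv1 ?ltW //.
  by field.
have m2 : m ^+ 2 = n `^ (- (2 / 3)).
  by rewrite -powR_mulrn ?powR_ge0 // -powRrM (_ : _ * 2%:R = - (2 / 3)) //; field.
have m_le1 : m <= 1.
  by rewrite -(@expr_le1 _ 3) ?(ltW m_gt0) // m3 invf_le1 // ler1n -(ltr0n R).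
by rewrite -m2 (t_K2a_le f_sym f_le1) // ?m_gt0 ?m3.
Qed.
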